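(* Let $K$ be a non-Archimedean locally compact field of characteristic $p>0$ with group of 1-units $U=1+M_K$. Let $f:U\to U$ be a locally analytic group endomorphism, and suppose there exist $y\in\mathbb{Z}_p$ and an open neighborhood $V$ of $1$ in $U$ such that $f(u)=u^y$ for all $u\in V$. Then $f(u)=u^y$ for all $u\in U$.
   Context: $M_K$ is the maximal ideal of the ring of integers $R_K$ of $K$; with constant field $\mathbb{F}$ of order $q$ and uniformizer $\pi$, $K=\mathbb{F}((\pi))$, $U=1+\pi\mathbb{F}[[\pi]]$, and $|x|=q^{-v(x)}$. A continuous function $f$ on a ball $B_{\alpha,t}=\{u\in R_K:|u-\alpha|\le t\}$, $t=|\rho|$, is analytic there if $f(u)=\sum_{n\ge0}c_n\left(\frac{u-\alpha}{\rho}\right)^n$ with $c_n\in K$, $c_n\to0$; $f:U\to K$ is locally analytic if each $\alpha\in U$ has a ball $B_{\alpha,t_\alpha}\subset U$, $t_\alpha>0$, on which $f$ is analytic. For $y\in\mathbb{Z}_p$ and $u=1+x\in U$, $u^y=\sum_{n\ge0}\binom{y}{n}x^n$. *)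

(* The local field K of characteristic p is modelled as
   F((pi)) for a finite field F (every non-Archimedean locally compact field of
   characteristic p > 0 is of this form).  *)
From mathcomp Require Import all_boot all_order all_algebra.
Set Implicit Arguments. Unset Strict Implicit. Unset Printing Implicit Defensive.
Import Order.TTheory GRing.Theory Num.Theory.
Local Open Scope ring_scope.

Section LocalField.
Variable F : finFieldType.

Definition ps := nat -> F.
Definition ps_one : ps := fun n => if n is 0%N then 1 else 0.
Definition ps_add (a b : ps) : ps := fun n => a n + b n.
Definition ps_opp (a : ps) : ps := fun n => - a n.
Definition ps_mul (a b : ps) : ps :=
  fun n => \sum_(i < n.+1) a i * b (n - i)%N.
Fixpoint ps_exp (a : ps) (n : nat) : ps :=
  if n is n'.+1 then ps_mul a (ps_exp a n') else ps_one.
Definition ps_shift (e : nat) (a : ps) : ps :=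
  fun n => if (e <= n)%N then a (n - e)%N else 0.

(* ---------- K = F((pi)) : an element is pi^(-lden) * lnum ---------- *)
Record lau := Lau { lden : nat; lnum : ps }.
Definition lcoef (x : lau) (m : int) : F :=
  match (m + (lden x)%:Z)%R with Posz k => lnum x k | Negz _ => 0 end.
Definition lau_of_ps (a : ps) : lau := Lau 0 a.
Definition lau_zero : lau := Lau 0 (fun _ => 0).
Definition lau_one : lau := Lau 0 ps_one.
Definition lau_add (x y : lau) : lau :=
  Lau (lden x + lden y) (ps_add (ps_shift (lden y) (lnum x)) (ps_shift (lden x) (lnum y))).
Definition lau_opp (x : lau) : lau := Lau (lden x) (ps_opp (lnum x)).
Definition lau_sub (x y : lau) : lau := lau_add x (lau_opp y).
Definition lau_mul (x y : lau) : lau := Lau (lden x + lden y) (ps_mul (lnum x) (lnum y)).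
Fixpoint lau_exp (x : lau) (n : nat) : lau :=
  if n is n'.+1 then lau_mul x (lau_exp x n') else lau_one.

(* equality in K (the representation above is not canonical) *)
Definition lau_eq (x y : lau) : Prop := forall m : int, lcoef x m = lcoef y m.
(* v(x) >= M, i.e. |x| <= q^(-M) *)
Definition vge (x : lau) (M : int) : Prop := forall m : int, m < M -> lcoef x m = 0.
Definition abs_le (x y : lau) : Prop := forall M : int, vge y M -> vge x M.
Definition lau_nonzero (x : lau) : Prop := exists m : int, lcoef x m != 0.

Definition tends_to_zero (c : nat -> lau) : Prop :=
  forall M : int, exists N : nat, forall n, (N <= n)%N -> vge (c n) M.
Fixpoint psum (c : nat -> lau) (w : lau) (N : nat) : lau :=
  if N is N'.+1 then lau_add (psum c w N') (lau_mul (c N') (lau_exp w N'))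
  else lau_zero.
Definition series_to (c : nat -> lau) (w : lau) (l : lau) : Prop :=
  forall M : int, exists N0 : nat, forall N, (N0 <= N)%N ->
    vge (lau_sub l (psum c w N)) M.

Record U1 := mkU1 { uval :> ps; uvalP : uval 0%N = 1 }.

Lemma ps_mul0 (a b : ps) : ps_mul a b 0%N = a 0%N * b 0%N.
Proof. by rewrite /ps_mul big_ord1. Qed.

Lemma U1_mulP (u v : U1) : ps_mul u v 0%N = 1.
Proof. by rewrite ps_mul0 !uvalP mulr1. Qed.
Definition U1_mul (u v : U1) : U1 := @mkU1 (ps_mul u v) (U1_mulP u v).

Definition U1_open (V : U1 -> Prop) : Prop :=
  forall u : U1, V u -> exists k : nat,
    forall w : U1, (forall i, (i < k)%N -> uval w i = uval u i) -> V w.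
Definition U1_one : U1 := @mkU1 ps_one erefl.

(* ---------- Z_p as the inverse limit of Z/p^k ---------- *)
Record zp (p : nat) := Zp {
  zres : nat -> nat;
  zres_lt : forall k, (zres k < p ^ k)%N;
  zres_compat : forall k, (zres k.+1 %% p ^ k = zres k)%N }.

(* image in F of binom(y, n) in Z_p: binom(y,n) = binom(y mod p^(n+1), n)
   mod p (Lucas), and p = char F. *)
Definition zbinomF (p : nat) (y : zp p) (n : nat) : F :=
  ('C(zres y n.+1, n))%:R.

(* u^y = sum_n binom(y,n) x^n, u = 1 + x; the coefficient of pi^m only
   involves n <= m since v(x^n) >= n. *)
Definition upow (p : nat) (u : U1) (y : zp p) : ps :=
  let x : ps := fun i => if i is 0%N then 0 else uval u i in
  fun m => \sum_(n < m.+1) zbinomF y n * ps_exp x n m.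

Definition analytic_on (f : U1 -> U1) (alpha : U1) (rho : lau) : Prop :=
  exists c : nat -> lau, tends_to_zero c /\
    forall u : U1, abs_le (lau_sub (lau_of_ps u) (lau_of_ps alpha)) rho ->
      forall w : lau, lau_eq (lau_mul rho w) (lau_sub (lau_of_ps u) (lau_of_ps alpha)) ->
        series_to c w (lau_of_ps (f u)).

Definition locally_analytic (f : U1 -> U1) : Prop :=
  forall alpha : U1, exists rho : lau, lau_nonzero rho /\
    (forall u : ps, abs_le (lau_sub (lau_of_ps u) (lau_of_ps alpha)) rho -> u 0%N = 1) /\
    analytic_on f alpha rho.

End LocalField.

(* In characteristic p the map u |-> u^(p^k) is the Frobenius on coefficients:
   (sum a_i pi^i)^(p^k) = sum a_i^(p^k) pi^(i p^k).  Hence u^(p^k) agrees with 1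
   up to order p^k, so it lies in V for k large, and since f is a homomorphism
   and u |-> u^y commutes with the Frobenius,
     f(u)_m^(p^k) = f(u^(p^k))_(m p^k) = (u^(p^k))^y_(m p^k) = (u^y)_m^(p^k).
   The Frobenius of the finite field F is injective, so f(u)_m = (u^y)_m. *)
From mathcomp Require Import all_boot all_order all_algebra.
From Stdlib Require Import FunctionalExtensionality.
Import GRing.Theory.
Set Implicit Arguments. Unset Strict Implicit.
Local Open Scope ring_scope.

Section PcharExpn.
Variables (R : comNzRingType) (p : nat).
Hypothesis hp : p \in [pchar R].

Lemma expn_pchar_gt0 k : (0 < p ^ k)%N.
Proof. by rewrite expn_gt0 prime_gt0 // (pcharf_prime hp). Qed.

Lemma pnat_expn_pchar k : [pchar R].-nat (p ^ k)%N.
Proof. by rewrite pnatX pnatE ?hp // (pcharf_prime hp). Qed.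

Lemma expr_pchar_sum k (I : Type) (r : seq I) (P : pred I) (G : I -> R) :
  (\sum_(i <- r | P i) G i) ^+ (p ^ k)%N = \sum_(i <- r | P i) G i ^+ (p ^ k)%N.
Proof.
apply: (big_morph (fun x => x ^+ (p ^ k)%N)).
  by move=> x z; apply: exprDn_pchar; exact: pnat_expn_pchar.
by rewrite expr0n eqn0Ngt expn_pchar_gt0.
Qed.

Lemma natr_expr_pchar k a : (a%:R : R) ^+ (p ^ k)%N = a%:R.
Proof.
elim: a => [|a IH]; first by rewrite expr0n eqn0Ngt expn_pchar_gt0.
by rewrite -addn1 natrD exprDn_pchar ?pnat_expn_pchar // IH expr1n.
Qed.

End PcharExpn.

Lemma coef_expr_pchar (R : comNzRingType) p (hp : p \in [pchar R]) k (P : {poly R}) j :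
  (P ^+ (p ^ k)%N)`_j = if (p ^ k %| j)%N then P`_(j %/ p ^ k) ^+ (p ^ k)%N else 0.
Proof.
have hpP : p \in [pchar {poly R}] by rewrite pchar_poly.
have frobP : P ^+ (p ^ k)%N = (\poly_(i < size P) (P`_i ^+ (p ^ k)%N)) \Po 'X^(p ^ k).
  rewrite -{1}[P]coefK !poly_def (expr_pchar_sum hpP) linear_sum /=.
  by apply: eq_bigr => i _; rewrite exprZn comp_polyZ comp_Xn_poly -!exprM mulnC.
rewrite frobP coef_comp_poly_Xn ?(expn_pchar_gt0 hp) //; case: ifP => // _.
rewrite coef_poly; case: ltnP => // hsize.
by rewrite nth_default // expr0n eqn0Ngt (expn_pchar_gt0 hp).
Qed.

Lemma coef_exprn_trunc (R : nzRingType) (P Q : {poly R}) L :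
  (forall i, (i < L)%N -> P`_i = Q`_i) ->
  forall n j, (j < L)%N -> (P ^+ n)`_j = (Q ^+ n)`_j.
Proof.
move=> eq_PQ; elim=> [|n IH] j hj; first by rewrite !expr0.
rewrite !exprS !coefM; apply: eq_bigr => i _.
have hi : (i < L)%N by rewrite (leq_ltn_trans _ hj) // -ltnS.
by rewrite eq_PQ // IH // (leq_ltn_trans (leq_subr _ _) hj).
Qed.

Lemma expr_pchar_inj (R : idomainType) p (hp : p \in [pchar R]) k :
  injective (fun x : R => x ^+ (p ^ k)%N).
Proof.
move=> x z /= eq_xz; apply/eqP; rewrite -subr_eq0.
have hN := pnat_expn_pchar hp k.
have : (x - z) ^+ (p ^ k)%N == 0 by rewrite exprDn_pchar // exprNn_pchar // eq_xz subrr.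
by rewrite expf_eq0 (expn_pchar_gt0 hp).
Qed.

Section PowerSeries.
Variables (F : finFieldType) (p : nat).
Hypothesis hp : p \in [pchar F].

Lemma ps_exp_ext (a b : ps F) : a =1 b -> forall n, ps_exp a n =1 ps_exp b n.
Proof.
move=> eq_ab; elim=> [|n IH] j //=.
by apply: eq_bigr => i _; rewrite eq_ab IH.
Qed.

Lemma ps_exp_low (a : ps F) : a 0%N = 0 -> forall n j, (j < n)%N -> ps_exp a n j = 0.
Proof.
move=> a0; elim=> [|n IH] j // hj /=.
rewrite /ps_mul big1 // => -[[|i] hi] _ /=; first by rewrite a0 mul0r.
rewrite IH ?mulr0 // ltn_subLR; last by rewrite -ltnS.
by rewrite (leq_trans hj) // ltnS leq_addl.
Qed.

Lemma ps_exp_poly (a : ps F) n L j : (j < L)%N ->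
  ps_exp a n j = ((\poly_(i < L) a i) ^+ n)`_j.
Proof.
elim: n j => [|n IH] j hj /=; first by rewrite expr0 coefC; case: j {hj}.
rewrite exprS coefM; apply: eq_bigr => i _.
have hi : (i < L)%N by rewrite (leq_ltn_trans _ hj) // -ltnS.
by rewrite coef_poly hi IH // (leq_ltn_trans (leq_subr _ _) hj).
Qed.

Definition ps_frob (k : nat) (a : ps F) : ps F :=
  fun j => if (p ^ k %| j)%N then a (j %/ p ^ k)%N ^+ (p ^ k)%N else 0.

Lemma ps_frob_mull k (a : ps F) m : ps_frob k a (p ^ k * m)%N = a m ^+ (p ^ k)%N.
Proof. by rewrite /ps_frob dvdn_mulr // mulKn // (expn_pchar_gt0 hp). Qed.

Lemma coef_poly_expr_pchar k (a : ps F) L j : (j < L)%N ->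
  ((\poly_(i < L) a i) ^+ (p ^ k)%N)`_j = ps_frob k a j.
Proof.
move=> hj; rewrite coef_expr_pchar // /ps_frob coef_poly.
by case: ifP => // _; rewrite (leq_ltn_trans (leq_div _ _) hj).
Qed.

Lemma ps_exp_pchar k (a : ps F) : ps_exp a (p ^ k)%N =1 ps_frob k a.
Proof. by move=> j; rewrite (ps_exp_poly _ _ (ltnSn j)) coef_poly_expr_pchar. Qed.

Lemma ps_exp_frob k (a : ps F) n : ps_exp (ps_frob k a) n =1 ps_frob k (ps_exp a n).
Proof.
move=> j; pose P := \poly_(i < j.+1) a i.
have eq_trunc i : (i < j.+1)%N -> (\poly_(i < j.+1) ps_frob k a i)`_i = (P ^+ (p ^ k)%N)`_i.
  by move=> hi; rewrite coef_poly hi coef_poly_expr_pchar.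
rewrite (ps_exp_poly _ _ (ltnSn j)) (coef_exprn_trunc eq_trunc) //.
rewrite -exprM mulnC exprM coef_expr_pchar // /ps_frob; case: ifP => // _.
by rewrite -ps_exp_poly // ltnS leq_div.
Qed.

Fixpoint U1_powS (u : U1 F) (n : nat) : U1 F :=
  if n is n'.+1 then U1_mul u (U1_powS u n') else u.

Lemma U1_powSE (u : U1 F) n : uval (U1_powS u n) =1 ps_exp u n.+1.
Proof.
elim: n => [|n IH] j /=; last by apply: eq_bigr => i _; rewrite IH.
rewrite /ps_mul big_ord_recr /= subnn mulr1 big1 ?add0r // => -[i hi] _ /=.
by case: (j - i)%N (subn_gt0 i j) => [|?]; rewrite ?mulr0 // hi.
Qed.

Lemma U1_powS_hom (f : U1 F -> U1 F) :
  (forall u v, f (U1_mul u v) = U1_mul (f u) (f v)) ->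
  forall u n, f (U1_powS u n) = U1_powS (f u) n.
Proof. by move=> fhom u; elim=> [|n IH] //=; rewrite fhom IH. Qed.

Lemma U1_powS_pchar (u : U1 F) k : uval (U1_powS u (p ^ k)%N.-1) =1 ps_frob k u.
Proof. by move=> j; rewrite U1_powSE prednK ?(expn_pchar_gt0 hp) // ps_exp_pchar. Qed.

Lemma U1_powS_pchar_near1 (u : U1 F) k i : (i < p ^ k)%N ->
  uval (U1_powS u (p ^ k)%N.-1) i = uval (U1_one F) i.
Proof.
rewrite U1_powS_pchar /ps_frob; case: i => [|i] hi.
  by rewrite dvdn0 div0n uvalP expr1n.
by case: ifP => // /(dvdn_leq (ltn0Sn _)); rewrite leqNgt hi.
Qed.

Definition U1_sub1 (u : U1 F) : ps F := fun i => if i is 0%N then 0 else uval u i.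

Lemma U1_sub1_pchar (u : U1 F) k :
  U1_sub1 (U1_powS u (p ^ k)%N.-1) =1 ps_frob k (U1_sub1 u).
Proof.
case=> [|i] /=; rewrite /ps_frob.
  by rewrite dvdn0 div0n expr0n eqn0Ngt (expn_pchar_gt0 hp).
rewrite U1_powS_pchar /ps_frob; case: ifP => // hdvd.
have : (0 < i.+1 %/ p ^ k)%N by rewrite divn_gt0 ?(expn_pchar_gt0 hp) // dvdn_leq.
by case: (i.+1 %/ p ^ k)%N.
Qed.

(* The binomial coefficients lie in the prime field, which the Frobenius fixes. *)
Lemma upow_pchar (u : U1 F) (y : zp p) k m :
  upow (U1_powS u (p ^ k)%N.-1) y (p ^ k * m)%N = upow u y m ^+ (p ^ k)%N.
Proof.
rewrite /upow -/(U1_sub1 _) -/(U1_sub1 u) expr_pchar_sum //.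
under eq_bigr do rewrite (ps_exp_ext (U1_sub1_pchar u k)) ps_exp_frob ps_frob_mull.
under [RHS]eq_bigr do rewrite exprMn /zbinomF natr_expr_pchar // -/(zbinomF F y _).
rewrite [RHS](big_ord_widen (p ^ k * m).+1
    (fun n => zbinomF F y n * ps_exp (U1_sub1 u) n m ^+ (p ^ k)%N)); last first.
  by rewrite ltnS leq_pmull ?(expn_pchar_gt0 hp).
rewrite [RHS]big_mkcond; apply: eq_bigr => n _ /=; case: ifP => // hn.
rewrite ps_exp_low //; last by rewrite ltnNge -ltnS hn.
by rewrite expr0n eqn0Ngt (expn_pchar_gt0 hp) mulr0.
Qed.

End PowerSeries.

Theorem lemma2p5 (F : finFieldType) (p : nat) (hp : p \in [pchar F]%R)
  (f : U1 F -> U1 F)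
  (fhom : forall u v : U1 F, f (U1_mul u v) = U1_mul (f u) (f v))
  (fan : locally_analytic f)
  (y : zp p) (V : U1 F -> Prop)
  (Vopen : U1_open V) (V1 : V (U1_one F))
  (hV : forall u : U1 F, V u -> uval (f u) = upow u y) :
  forall u : U1 F, uval (f u) = upow u y.
Proof.
move=> u; apply: functional_extensionality => m.
have [k near1_V] := Vopen _ V1.
have V_frob : V (U1_powS u (p ^ k)%N.-1).
  apply: near1_V => i hik; apply: (U1_powS_pchar_near1 hp).
  exact: ltn_trans hik (ltn_expl k (prime_gt1 (pcharf_prime hp))).
apply: (@expr_pchar_inj _ _ hp k) => /=.
rewrite -(upow_pchar hp) -(hV _ V_frob) (U1_powS_hom fhom) (U1_powS_pchar hp).
by rewrite (ps_frob_mull hp).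
Qed.
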